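(* Let $(R,\mathfrak m,k)$ be a one-dimensional analytically irreducible local domain with canonical map $k\to\overline R/\mathfrak n$ an isomorphism, with $n,\mathcal T(R),\mathcal I(R)$ as in the context. If $n\le 3$, then $\mathcal T(R)=\mathcal I(R)$; in particular $\mathcal T(R)$ is a finite set.
   Context: $\overline R$ is the integral closure of $R$ in $Q(R)$, assumed finitely generated over $R$ and local with maximal ideal $\mathfrak n$; $v$ is the normalized valuation of $\overline R$; $v(R)=\{a_0=0<a_1<\cdots\}$; $n$ is the smallest integer with $a_{n+j}=a_n+j$ for all $j\ge 0$ (equivalently $n=\ell_R(R/(R:\overline R))$); $I_j=\{r\in R\mid v(r)\ge a_j\}$ for $0\le j\le n$ and $\mathcal I(R)=\{I_0,\dots,I_n\}$. $\mathcal T(R)$ is the set of nonzero trace ideals of $R$ (ideals of the form $\sum_{f\in\mathrm{Hom}_R(M,R)}\mathrm{Im}f$). *)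

From Stdlib Require List.
From HB Require Import structures.
From mathcomp Require Import all_boot all_order all_algebra fraction.
Set Implicit Arguments. Unset Strict Implicit. Unset Printing Implicit Defensive.
Import Order.TTheory GRing.Theory Num.Theory.
Local Open Scope ring_scope.

Section Defs.
Variable R : idomainType.

Definition K := {fraction R}.
Definition toK (r : R) : K := FracField.tofrac r.

Definition is_ideal (I : R -> Prop) : Prop :=
  I 0 /\ (forall x y, I x -> I y -> I (x + y)) /\ (forall a x, I x -> I (a * x)).

Definition in_span (s : seq R) (x : R) : Prop :=
  exists c : seq R, x = \sum_(i < size s) c`_i * s`_i.

Definition noetherian : Prop :=
  forall I, is_ideal I -> exists s : seq R, forall x, I x <-> in_span s x.

(* maximal ideal = non-units; R local iff the non-units are closed under + *)
Definition mm (x : R) : Prop := x \isn't a GRing.unit.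
Definition local_ring : Prop := forall x y, mm x -> mm y -> mm (x + y).

Definition is_prime (P : R -> Prop) : Prop :=
  is_ideal P /\ ~ P 1 /\ (forall a b, P (a * b) -> P a \/ P b).

(* Krull dimension one, for a local domain: m <> 0 and every nonzero prime is m *)
Definition dim_one : Prop :=
  (exists x, x != 0 /\ mm x) /\
  (forall P, is_prime P -> (exists x, x != 0 /\ P x) -> forall x, mm x -> P x).

Fixpoint mpow (k : nat) (x : R) : Prop :=
  match k with
  | 0 => True
  | k'.+1 => exists s : seq (R * R),
      (forall p, List.In p s -> mm p.1 /\ mpow k' p.2) /\
      x = \sum_(p <- s) p.1 * p.2
  end.

(* m-adic Cauchy and null sequences; the completion R^ is Cauchy / null. *)
Definition madic_cauchy (u : nat -> R) : Prop :=
  forall k, exists N, forall p q, (N <= p)%N -> (N <= q)%N -> mpow k (u p - u q).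
Definition madic_null (u : nat -> R) : Prop :=
  forall k, exists N, forall p, (N <= p)%N -> mpow k (u p).

(* analytically irreducible: the m-adic completion is a domain *)
Definition analytically_irreducible : Prop :=
  forall u w, madic_cauchy u -> madic_cauchy w ->
    madic_null (fun p => u p * w p) -> madic_null u \/ madic_null w.

(* integral closure Rbar of R in K = Q(R) *)
Definition integral (x : K) : Prop :=
  exists p : {poly R}, p \is monic /\ root (map_poly toK p) x.

Definition Rbar_unit (x : K) : Prop := integral x /\ x != 0 /\ integral x^-1.
Definition nn (x : K) : Prop := integral x /\ ~ Rbar_unit x.

Definition Rbar_finite : Prop :=
  exists s : seq K, forall x, integral x <->
    exists c : seq R, x = \sum_(i < size s) toK c`_i * s`_i.
Definition Rbar_local : Prop := forall x y, nn x -> nn y -> nn (x + y).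

(* canonical map k = R/m -> Rbar/n is an isomorphism (it is always injective) *)
Definition residue_iso : Prop :=
  forall x, integral x -> exists r : R, nn (x - toK r).

(* v is the normalized (surjective onto Z) valuation of K whose
   valuation ring is Rbar; v is only meaningful on nonzero elements *)
Definition normalized_valuation_of_Rbar (v : K -> int) : Prop :=
  (forall x y, x != 0 -> y != 0 -> v (x * y) = v x + v y) /\
  (forall x y, x != 0 -> y != 0 -> x + y != 0 -> Num.min (v x) (v y) <= v (x + y)) /\
  (forall z : int, exists x, x != 0 /\ v x = z) /\
  (forall x, x != 0 -> (integral x <-> 0 <= v x)).

Definition valR (v : K -> int) (s : nat) : Prop :=
  exists r : R, r != 0 /\ v (toK r) = s%:Z.

Definition enumerates (S : nat -> Prop) (a : nat -> nat) : Prop :=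
  (forall j, (a j < a j.+1)%N) /\ (forall s, S s <-> exists j, a j = s).

Definition conductor_index (a : nat -> nat) (n : nat) : Prop :=
  (forall j, a (n + j)%N = (a n + j)%N) /\
  (forall m, (forall j, a (m + j)%N = (a m + j)%N) -> (n <= m)%N).

Definition Ij (v : K -> int) (a : nat -> nat) (j : nat) (x : R) : Prop :=
  x = 0 \/ (x != 0 /\ (a j)%:Z <= v (toK x)).

Definition Rlinear (M : lmodType R) (f : M -> R) : Prop :=
  forall (c : R) (m m' : M), f (c *: m + m') = c * f m + f m'.

Definition trace_ideal (M : lmodType R) (x : R) : Prop :=
  exists s : seq ((M -> R) * M),
    (forall p, List.In p s -> Rlinear p.1) /\ x = \sum_(p <- s) p.1 p.2.

Definition in_T (J : R -> Prop) : Prop :=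
  (exists M : lmodType R, forall x, J x <-> trace_ideal M x) /\
  (exists x, x != 0 /\ J x).

Definition in_I (v : K -> int) (a : nat -> nat) (n : nat) (J : R -> Prop) : Prop :=
  exists j, (j <= n)%N /\ forall x, J x <-> Ij v a j x.

End Defs.

(* A nonzero trace ideal [J] is stable: if [q J] is contained in [R], then it
   is contained in [J], because composing the maps [M -> R] with multiplication
   by [q] gives maps [M -> R] again.  Let [a m] be the least value of [J].  Since the
   conductor [{v >= a n}] lies in [R], stability puts the conductor inside [J];
   and since [k = Rbar/n], leading terms can be cancelled one at a time, so
   [J = I m] as soon as [J] has elements of every value [a k], [m <= k < n].
   For [n <= 3] only [k = m + 1] with [m >= 1] is at stake ([m = 0] means
   [J = R]); if [J] missed [a (m+1)], multiplication by an element of value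
   [a (m+1) - a m] would map [J] into [R] but not into [J].
   Conversely, for [j <= n] a map [I j -> R] is multiplication by some [q]
   mapping the conductor into [R], and [v q >= 0] because [a n - 1] is a gap;
   so [I j] is its own trace ideal. *)

From HB Require Import structures.
From mathcomp Require Import all_boot all_order all_algebra fraction.
From mathcomp Require Import boolp zify ring.
Set Implicit Arguments. Unset Strict Implicit. Unset Printing Implicit Defensive.
Import Order.TTheory GRing.Theory Num.Theory.
Local Open Scope ring_scope.

HB.instance Definition _ (R : idomainType) :=
  GRing.RMorphism.copy (@toK R) (@FracField.tofrac R).

Lemma int_downward_ind (T : Type) (mu : T -> int) (N : int) (P : T -> Prop) :
  (forall y, N <= mu y -> P y) ->
  (forall y, mu y < N -> (forall w, mu y < mu w -> P w) -> P y) ->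
  forall y, P y.
Proof.
move=> top step.
suff bounded k : forall y, N - mu y <= k%:Z -> P y.
  by move=> y; apply: (bounded `|N - mu y|%N); rewrite abszE ler_norm.
elim: k => [|k IH] y hy; first by apply: top; lia.
have [/top //|lt_yN] := lerP N (mu y).
by apply: step => // w hw; apply: IH; lia.
Qed.

Arguments int_downward_ind {T} mu N [P].

Section Enumeration.
Variables (S : nat -> Prop) (a : nat -> nat).
Hypothesis Ha : enumerates S a.

Lemma enum_leq_mono : {mono a : i j / (i <= j)%N}.
Proof.
apply: leq_mono; apply: homo_ltn => [y x z|]; [exact: ltn_trans | exact: Ha.1].
Qed.

Lemma enum_ltn_mono : {mono a : i j / (i < j)%N}.
Proof. exact/leqW_mono/enum_leq_mono. Qed.

Lemma enum0 : S 0 -> a 0 = 0%N.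
Proof.
case/(Ha.2 0%N) => j aj0; apply/eqP.
by rewrite -leqn0 -[X in (_ <= X)%N]aj0 enum_leq_mono.
Qed.

Variable n : nat.
Hypothesis Hn : conductor_index a n.

Lemma conductor_enum z : (a n <= z)%N -> exists j, a j = z.
Proof. by move=> anz; exists (n + (z - a n))%N; rewrite Hn.1 subnKC. Qed.

Lemma conductor_gap j : (0 < n)%N -> a j != (a n).-1.
Proof.
move=> n_gt0; apply/eqP => aj.
have an_gt0 : (a 0 < a n)%N by rewrite enum_ltn_mono.
have j_lt_n : (j < n)%N by rewrite -enum_ltn_mono aj; lia.
have j_ge : (n.-1 <= j)%N.
  have : (a n.-1 < a n)%N by rewrite enum_ltn_mono; lia.
  by move=> lt_an; rewrite -enum_leq_mono aj; lia.
have j_eq : j = n.-1 by lia.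
suff : (n <= j)%N by lia.
apply: Hn.2 => -[|i]; first by rewrite !addn0.
have -> : (j + i.+1 = n + i)%N by lia.
by rewrite Hn.1 aj; lia.
Qed.

End Enumeration.

Section FractionField.
Variable R : idomainType.
Implicit Types (r : R) (x : K R).

Lemma toK_eq0 r : (toK r == 0) = (r == 0).
Proof. exact: tofrac_eq0. Qed.

Lemma toK_neq0 r : r != 0 -> toK r != 0.
Proof. by rewrite toK_eq0. Qed.

Lemma toK_inj : injective (@toK R).
Proof. by move=> r s /eqP; rewrite /toK tofrac_eq => /eqP. Qed.

Lemma toK_frac x : exists r s, s != 0 /\ x * toK s = toK r.
Proof.
rewrite /toK /K in x *; elim/quotW: x => f.
exists \n_f, \d_f; split; first exact: denom_ratioP.
unlock FracField.tofrac; rewrite -[LHS]FracField.pi_mul; apply/eqmodP.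
rewrite /= FracField.equivfE /FracField.mulf.
rewrite !numden_Ratio ?oner_eq0 ?mulf_neq0 ?denom_ratioP //.
- by rewrite !mulr1 mulrC.
all: exact: oner_neq0.
Qed.

Definition inR x := exists r, x = toK r.

Lemma inR_toK r : inR (toK r). Proof. by exists r. Qed.

Lemma inR0 : inR 0. Proof. by exists 0; rewrite rmorph0. Qed.

Lemma inRD x y : inR x -> inR y -> inR (x + y).
Proof. by move=> [r ->] [s ->]; exists (r + s); rewrite rmorphD. Qed.

Lemma inRM x y : inR x -> inR y -> inR (x * y).
Proof. by move=> [r ->] [s ->]; exists (r * s); rewrite rmorphM. Qed.

(* The preimage of [x] under [toK], and junk [0] when [x] is not in [R]. *)
Definition toR x : R :=
  if pselect (inR x) is left h then projT1 (cid h) else 0.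

Lemma toRK x : inR x -> toK (toR x) = x.
Proof. by rewrite /toR; case: pselect => // h _; case: (cid h) => r /= ->. Qed.

Lemma integral_toK r : integral (toK r).
Proof.
exists ('X - r%:P); split; first exact: monicXsubC.
by rewrite rmorphB /= map_polyX map_polyC rootE !hornerE subrr.
Qed.

Lemma common_denominator (s : seq (K R)) :
  exists2 d : R, d != 0 & forall x, x \in s -> inR (toK d * x).
Proof.
elim: s => [|x s [d d0 hd]]; first by exists 1; rewrite ?oner_neq0.
have [r [b [b0 xb]]] := toK_frac x.
exists (b * d); first by rewrite mulf_neq0.
move=> y; rewrite inE => /orP[/eqP ->|ys].
  exists (d * r); rewrite !rmorphM /= -xb; ring.
by rewrite rmorphM -mulrA; apply: inRM; [exact: inR_toK | exact: hd].
Qed.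

Lemma Rbar_finite_denominator : Rbar_finite R ->
  exists2 d : R, d != 0 & forall x, integral x -> inR (toK d * x).
Proof.
case=> s Hs; have [d d0 hd] := common_denominator s.
exists d => // x /Hs [c ->]; rewrite mulr_sumr.
apply: (big_ind inR inR0 inRD) => i _.
by rewrite mulrCA; apply: inRM; [exact: inR_toK | apply: hd; exact: mem_nth].
Qed.

End FractionField.

Section Valuation.
Variables (R : idomainType) (v : K R -> int).
Hypothesis Hv : normalized_valuation_of_Rbar v.
Implicit Types (r : R) (x y : K R).

Lemma valM x y : x != 0 -> y != 0 -> v (x * y) = v x + v y.
Proof. exact: Hv.1. Qed.

Lemma valD_ge_min x y : x != 0 -> y != 0 -> x + y != 0 ->
  Num.min (v x) (v y) <= v (x + y).
Proof. exact: Hv.2.1. Qed.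

Lemma integral_val x : x != 0 -> integral x <-> 0 <= v x.
Proof. exact: Hv.2.2.2. Qed.

Lemma val1 : v 1 = 0.
Proof.
have : v (1 : K R) = v 1 + v 1 by rewrite -{1}(mulr1 (1 : K R)) valM // oner_neq0.
lia.
Qed.

Lemma valV x : x != 0 -> v x^-1 = - v x.
Proof. by move=> x0; have := valM x0 (invr_neq0 x0); rewrite divff // val1; lia. Qed.

Lemma val_div x y : x != 0 -> y != 0 -> v (x / y) = v x - v y.
Proof. by move=> x0 y0; rewrite valM ?invr_neq0 // valV. Qed.

Lemma val_toK_ge0 r : r != 0 -> 0 <= v (toK r).
Proof. by move=> r0; apply/(integral_val (toK_neq0 r0)); exact: integral_toK. Qed.

Lemma val_toKM r s : r != 0 -> s != 0 -> v (toK (r * s)) = v (toK r) + v (toK s).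
Proof. by move=> r0 s0; rewrite rmorphM valM ?toK_eq0. Qed.

Lemma nn_val_gt0 x : x != 0 -> nn x -> 0 < v x.
Proof.
move=> x0 [ix not_unit]; rewrite lt_def (integral_val x0).1 // andbT.
apply/eqP => vx0; apply: not_unit; split; first exact: ix.
split; first exact: x0.
by apply/(integral_val (invr_neq0 x0)); rewrite valV // vx0.
Qed.

Lemma unit_val0 r : r \is a GRing.unit -> v (toK r) = 0.
Proof.
move=> ur; have r0 : r != 0 by apply: contraTneq ur => ->; rewrite unitr0.
have ri0 : r^-1 != 0 by rewrite invr_eq0.
have := val_toKM r0 ri0; rewrite divrr // rmorph1 val1.
by have := val_toK_ge0 r0; have := val_toK_ge0 ri0; lia.
Qed.

Hypothesis Hres : residue_iso R.

(* Since [k = Rbar/n], the ratio of two elements of equal value is congruent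
   to an element of [R] modulo [n]; this cancels the leading term. *)
Lemma residue_cancel x y : x != 0 -> y != 0 -> v x = v y ->
  exists u : R, x - toK u * y = 0 \/ (x - toK u * y != 0 /\ v y < v (x - toK u * y)).
Proof.
move=> x0 y0 vxy.
have q0 : x / y != 0 by rewrite mulf_neq0 ?invr_neq0.
have iq : integral (x / y) by apply/(integral_val q0); rewrite val_div // vxy subrr.
have [u nq] := Hres iq; exists u.
have -> : x - toK u * y = (x / y - toK u) * y by rewrite mulrBl divfK.
have [->|d0] := eqVneq (x / y - toK u) 0; first by left; rewrite mul0r.
right; split; first by rewrite mulf_neq0.
by rewrite valM // ltrDr; apply: nn_val_gt0.
Qed.

Hypothesis Hloc : local_ring R.

Lemma val0_unit r : r != 0 -> v (toK r) = 0 -> r \is a GRing.unit.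
Proof.
move=> r0 vr; apply/negPn/negP => not_unit.
have x0 := toK_neq0 r0.
have ix : integral (toK r)^-1 by apply/(integral_val (invr_neq0 x0)); rewrite valV // vr.
have [u nu] := Hres ix.
have E : ((toK r)^-1 - toK u) * toK r = toK (1 - u * r).
  by rewrite mulrBl mulVf // rmorphB rmorph1 rmorphM.
have mur : mm (u * r) by rewrite /mm unitrM negb_and not_unit orbT.
have [d0|d0] := eqVneq ((toK r)^-1 - toK u) 0.
  move: E; rewrite d0 mul0r => /esym/eqP; rewrite toK_eq0 subr_eq0 => /eqP ur1.
  by move/unitrP: not_unit; apply; exists u; rewrite -ur1 mulrC.
have m1 : mm (1 - u * r).
  apply/negP => /unit_val0; rewrite -E valM ?invr_neq0 // vr addr0.
  by move/eqP; rewrite gt_eqF // nn_val_gt0.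
by have := Hloc m1 mur; rewrite /mm subrK unitr1.
Qed.

End Valuation.

Section ValueSemigroup.
Variables (R : idomainType) (v : K R -> int) (a : nat -> nat) (n : nat).
Hypotheses (Hv : normalized_valuation_of_Rbar v) (Ha : enumerates (valR v) a).
Hypothesis Hn : conductor_index a n.

Lemma enum_val j : exists2 r : R, r != 0 & v (toK r) = (a j)%:Z.
Proof. by have [r [r0 vr]] := (Ha.2 (a j)).2 (ex_intro _ j erefl); exists r. Qed.

Lemma val_enum (r : R) : r != 0 -> exists j, v (toK r) = (a j)%:Z.
Proof.
move=> r0; have vr := val_toK_ge0 Hv r0.
have [j aj] : exists j, a j = `|v (toK r)|%N by apply/Ha.2; exists r; rewrite gez0_abs.
by exists j; rewrite aj gez0_abs.
Qed.

Lemma enum_val0 : a 0 = 0%N.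
Proof. by apply: (enum0 Ha); exists 1; rewrite oner_neq0 rmorph1 (val1 Hv). Qed.

Lemma conductor_val (z : int) : (a n)%:Z <= z -> exists2 r : R, r != 0 & v (toK r) = z.
Proof.
move=> anz; have z0 : 0 <= z by apply: le_trans anz.
have [j aj] : exists j, a j = `|z|%N by apply: (conductor_enum Hn); lia.
by have [r r0 vr] := enum_val j; exists r; rewrite // vr aj gez0_abs.
Qed.

Lemma val_conductor_gap (r : R) : r != 0 -> v (toK r) != (a n)%:Z - 1.
Proof.
move=> r0; have [j ->] := val_enum r0.
have [n0|n_gt0] := posnP n; first by rewrite n0 enum_val0; lia.
have := conductor_gap Ha Hn j n_gt0.
have : (a 0 < a n)%N by rewrite (enum_ltn_mono Ha).
by rewrite enum_val0; lia.
Qed.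

Lemma conductor_colon_integral (q : K R) : q != 0 ->
  (forall y, y != 0 -> (a n)%:Z <= v (toK y) -> inR (q * toK y)) -> 0 <= v q.
Proof.
move=> q0 hq; rewrite leNgt; apply/negP => vq.
have [y y0 vy] : exists2 y, y != 0 & v (toK y) = (a n)%:Z - 1 - v q.
  by apply: conductor_val; lia.
have [r qy] : inR (q * toK y) by apply: hq y0 _; lia.
have r0 : r != 0 by rewrite -toK_eq0 -qy mulf_neq0 ?toK_neq0.
by have := val_conductor_gap r0; rewrite -qy valM ?toK_neq0 // vy; lia.
Qed.

Hypotheses (Hres : residue_iso R) (Hfin : Rbar_finite R).

Lemma conductor_inR y : y != 0 -> (a n)%:Z <= v y -> inR y.
Proof.
have [d d0 hd] := Rbar_finite_denominator Hfin.
have dK0 := toK_neq0 d0.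
elim/(int_downward_ind v (v (toK d))): y => y.
  move=> vdy y0 _; have yd0 : y / toK d != 0 by rewrite mulf_neq0 ?invr_neq0.
  have := hd (y / toK d); rewrite [toK d * _]mulrC divfK //; apply.
  by apply/(integral_val Hv yd0); rewrite val_div //; lia.
move=> _ IH y0 any.
have [r r0 vr] := conductor_val any.
have [u [yu|[yu0 vyu]]] := residue_cancel Hv Hres y0 (toK_neq0 r0) (esym vr).
  by exists (u * r); apply/eqP; rewrite rmorphM -subr_eq0 yu.
rewrite -(subrK (toK u * toK r) y); apply: inRD; last by apply: inRM; exact: inR_toK.
by apply: IH => //; [rewrite -vr | apply: le_trans (ltW vyu); rewrite vr].
Qed.

End ValueSemigroup.

Section Ideal.
Variables (R : idomainType) (J : R -> Prop).
Hypothesis HJ : is_ideal J.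

Lemma ideal0 : J 0. Proof. exact: HJ.1. Qed.

Lemma idealD x y : J x -> J y -> J (x + y). Proof. exact: HJ.2.1. Qed.

Lemma idealM c x : J x -> J (c * x). Proof. exact: HJ.2.2. Qed.

Lemma idealB x y : J x -> J y -> J (x - y).
Proof. by move=> Jx Jy; apply: idealD Jx _; rewrite -mulN1r; apply: idealM. Qed.

End Ideal.

Section ValuationIdeals.
Variables (R : idomainType) (v : K R -> int) (a : nat -> nat).
Hypotheses (Hv : normalized_valuation_of_Rbar v) (Ha : enumerates (valR v) a).

Lemma Ij_ideal j : is_ideal (Ij v a j).
Proof.
split; first by left.
split=> [x y [->|[x0 hx]]|c x [->|[x0 hx]]].
- by rewrite add0r.
- case=> [->|[y0 hy]]; first by rewrite addr0; right.
  have [->|xy0] := eqVneq (x + y) 0; [by left | right; split=> //].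
  have xyK0 : toK x + toK y != 0 by rewrite -rmorphD toK_neq0.
  rewrite rmorphD; apply: le_trans (valD_ge_min Hv _ _ xyK0); rewrite ?toK_neq0 //.
  by rewrite le_min hx hy.
- by rewrite mulr0; left.
- have [->|c0] := eqVneq c 0; first by rewrite mul0r; left.
  right; split; first by rewrite mulf_neq0.
  by rewrite (val_toKM Hv) //; have := val_toK_ge0 Hv c0; lia.
Qed.

Lemma ideal_min_val (J : R -> Prop) : (exists x, x != 0 /\ J x) ->
  exists m x1, [/\ J x1, x1 != 0, v (toK x1) = (a m)%:Z &
    forall z, J z -> z != 0 -> (a m)%:Z <= v (toK z)].
Proof.
case=> x [x0 Jx].
pose hit j := `[< exists y, [/\ J y, y != 0 & v (toK y) = (a j)%:Z] >].
have [j vx] := val_enum Hv Ha x0.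
have hit_ex : exists j, hit j by exists j; apply/asboolP; exists x.
case: (ex_minnP hit_ex) => m /asboolP [x1 [Jx1 x10 vx1]] m_min.
exists m, x1; split=> // z Jz z0; have [k vz] := val_enum Hv Ha z0.
rewrite vz lez_nat (enum_leq_mono Ha); apply: m_min; apply/asboolP; by exists z.
Qed.

Hypothesis Hres : residue_iso R.
Variable n : nat.

Lemma Ij_sub_ideal (J : R -> Prop) j : is_ideal J ->
  (forall y, y != 0 -> (a n)%:Z <= v (toK y) -> J y) ->
  (forall k, (j <= k < n)%N -> exists y, [/\ J y, y != 0 & v (toK y) = (a k)%:Z]) ->
  forall y, Ij v a j y -> J y.
Proof.
move=> HJ Jcond Jhit.
elim/(int_downward_ind (fun y => v (toK y)) (a n)%:Z) => y.
  by move=> vy [->|[y0 _]]; [exact: (ideal0 HJ) | exact: Jcond].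
move=> vy IH [->|[y0 ajy]]; first exact: (ideal0 HJ).
have [k vyk] := val_enum Hv Ha y0.
have [x [Jx x0 vx]] : exists y, [/\ J y, y != 0 & v (toK y) = (a k)%:Z].
  apply: Jhit; rewrite -(enum_leq_mono Ha) -(enum_ltn_mono Ha).
  by rewrite -lez_nat -ltz_nat -vyk ajy vy.
have [u] := residue_cancel Hv Hres (toK_neq0 y0) (toK_neq0 x0) (etrans vyk (esym vx)).
rewrite -rmorphM -rmorphB => -[yu|[yu0 vyu]].
  by move/eqP: yu; rewrite toK_eq0 subr_eq0 => /eqP ->; apply: (idealM HJ).
rewrite -(subrK (u * x) y); apply: (idealD HJ); last exact: (idealM HJ).
apply: IH; first by move: vyu; rewrite vx -vyk.
right; split; first by rewrite -toK_eq0.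
by apply: le_trans ajy (ltW _); move: vyu; rewrite vx -vyk.
Qed.

End ValuationIdeals.

Section Trace.
Variables (R : idomainType) (M : lmodType R).
Implicit Type f : M -> R.

Lemma Rlinear0 f : Rlinear f -> f 0 = 0.
Proof.
move=> lf; have := lf 1 0 0; rewrite scaler0 addr0 mul1r.
by rewrite -{1}[f 0]addr0 => /addrI <-.
Qed.

Lemma RlinearZ f c m : Rlinear f -> f (c *: m) = c * f m.
Proof. by move=> lf; have := lf c m 0; rewrite (Rlinear0 lf) !addr0. Qed.

Lemma trace_ideal0 : trace_ideal M 0.
Proof. by exists [::]; rewrite big_nil. Qed.

Lemma trace_ideal_cons f m x :
  Rlinear f -> trace_ideal M x -> trace_ideal M (f m + x).
Proof.
move=> lf [s [hs ->]]; exists ((f, m) :: s); rewrite big_cons.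
by split=> // p [<- //|]; apply: hs.
Qed.

Lemma trace_ideal_image f m : Rlinear f -> trace_ideal M (f m).
Proof. by move=> lf; rewrite -[f m]addr0; apply: trace_ideal_cons trace_ideal0. Qed.

Lemma trace_ideal_ind (P : R -> Prop) : P 0 ->
  (forall f m x, Rlinear f -> trace_ideal M x -> P x -> P (f m + x)) ->
  forall x, trace_ideal M x -> P x.
Proof.
move=> P0 Pcons x [s [hs ->]]; elim: s hs => [|[f m] s IH] hs; first by rewrite big_nil.
have hs' p : List.In p s -> Rlinear p.1 by move=> sp; apply: hs; right.
rewrite big_cons; apply: Pcons; [exact: (hs _ (or_introl erefl)) | | exact: IH].
by exists s.
Qed.

Lemma trace_ideal_is_ideal : is_ideal (trace_ideal M).
Proof.
split; first exact: trace_ideal0.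
split=> [x y + Ty|c].
  move: x; apply: trace_ideal_ind => [|f m x lf _ IH]; first by rewrite add0r.
  by rewrite -addrA; apply: trace_ideal_cons.
apply: trace_ideal_ind => [|f m x lf _ IH]; first by rewrite mulr0; exact: trace_ideal0.
by rewrite mulrDr -RlinearZ //; apply: trace_ideal_cons.
Qed.

Lemma trace_sub_ideal (J : R -> Prop) : is_ideal J ->
  (forall f, Rlinear f -> forall m, J (f m)) -> forall x, trace_ideal M x -> J x.
Proof.
move=> HJ fJ; apply: trace_ideal_ind => [|f m x lf _ Jx]; first exact: ideal0 HJ.
by apply: (idealD HJ) Jx; apply: fJ.
Qed.

(* In the paper's notation, [(R : J) = (J : J)]. *)
Definition colon_stable (J : R -> Prop) := forall q : K R,
  (forall z, J z -> inR (q * toK z)) ->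
  forall z, J z -> exists2 r, J r & q * toK z = toK r.

Lemma trace_ideal_stable : colon_stable (trace_ideal M).
Proof.
move=> q hq; apply: trace_ideal_ind => [|f m x lf Tx [r Tr qx]].
  by exists 0; [exact: trace_ideal0 | rewrite rmorph0 mulr0].
pose g m := toR (q * toK (f m)).
have gK m' : toK (g m') = q * toK (f m').
  by apply: toRK; apply: hq; apply: trace_ideal_image.
have lg : Rlinear g.
  move=> c m1 m2; apply: toK_inj.
  by rewrite rmorphD rmorphM /= !gK lf rmorphD rmorphM /=; ring.
exists (g m + r); first exact: trace_ideal_cons.
by rewrite !rmorphD /= mulrDr gK qx.
Qed.

End Trace.

Section IdealModule.
Variables (R : idomainType) (J : R -> Prop).
Hypothesis HJ : is_ideal J.

Definition ideal_mem : {pred R^o} := fun x => `[< J x >].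

Lemma ideal_mem_subsemimod : subsemimod_closed ideal_mem.
Proof.
split; first split.
- exact/asboolT/(ideal0 HJ).
- by move=> x y /asboolP Jx /asboolP Jy; apply/asboolT/(idealD HJ).
- by move=> c x /asboolP Jx; apply/asboolT/(idealM HJ).
Qed.

HB.instance Definition _ :=
  GRing.isSubmodClosed.Build R R^o ideal_mem ideal_mem_subsemimod.

(* [J] viewed as an [R]-module; the proof [HJ] is a parameter of the type so
   that the module structure can be found by type inference. *)
Definition ideal_module of is_ideal J := {x : R^o | x \in ideal_mem}.

HB.instance Definition _ :=
  [isSub for @sval R^o (fun x => x \in ideal_mem) : ideal_module HJ -> R^o].
HB.instance Definition _ := [Choice of ideal_module HJ by <:].
HB.instance Definition _ := [SubChoice_isSubLmodule of ideal_module HJ by <:].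

Definition ideal_elem x (Jx : J x) : ideal_module HJ := Sub x (asboolT Jx).

Lemma ideal_module_mem (m : ideal_module HJ) : J (val m).
Proof. exact/asboolP/(valP m). Qed.

Lemma Rlinear_val : Rlinear (val : ideal_module HJ -> R).
Proof. by []. Qed.

Lemma ideal_sub_trace x : J x -> trace_ideal (ideal_module HJ) x.
Proof.
move=> Jx; rewrite -[x]addr0 -[x in x + 0]/(val (ideal_elem Jx)).
exact: trace_ideal_cons Rlinear_val (trace_ideal0 _).
Qed.

Lemma ideal_module_hom_mul (f : ideal_module HJ -> R) :
  Rlinear f -> forall m m0, val m * f m0 = val m0 * f m.
Proof.
move=> lf m m0; rewrite -!(RlinearZ _ _ lf); congr f; apply: val_inj.
exact: mulrC.
Qed.

End IdealModule.

Section IjTrace.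
Variables (R : idomainType) (v : K R -> int) (a : nat -> nat) (n : nat).
Hypotheses (Hv : normalized_valuation_of_Rbar v) (Ha : enumerates (valR v) a).
Hypothesis Hn : conductor_index a n.

Lemma Ij_hom_image j (f : ideal_module (Ij_ideal a Hv j) -> R) :
  (j <= n)%N -> Rlinear f -> forall m, Ij v a j (f m).
Proof.
move=> jn lf m.
have [y0 y00 vy0] := enum_val Ha j.
have Iy0 : Ij v a j y0 by right; rewrite vy0.
pose q := toK (f (ideal_elem (Ij_ideal a Hv j) Iy0)) / toK y0.
have fq m' : toK (f m') = q * toK (val m' : R).
  have := ideal_module_hom_mul lf m' (ideal_elem _ Iy0).
  rewrite SubK => /(congr1 (@toK R)); rewrite !rmorphM /= => E.
  apply: (mulfI (toK_neq0 y00)); rewrite -E /q [RHS]mulrA [toK y0 * _]mulrC.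
  by rewrite divfK ?toK_neq0 // mulrC.
have [q0|q0] := eqVneq q 0.
  by left; apply: toK_inj; rewrite fq q0 mul0r rmorph0.
have vq : 0 <= v q.
  apply: (conductor_colon_integral Hv Ha Hn q0) => y y_neq0 vy.
  have Iy : Ij v a j y.
    by right; split=> //; apply: le_trans vy; rewrite lez_nat (enum_leq_mono Ha).
  by exists (f (ideal_elem _ Iy)); rewrite fq SubK.
have [fm0|fm0] := eqVneq (f m) 0; [by left | right; split=> //].
have [m0|[m0 vm]] := ideal_module_mem m.
  by move: fm0; rewrite -toK_eq0 fq m0 rmorph0 mulr0 eqxx.
by rewrite fq valM ?toK_neq0 //; lia.
Qed.

Lemma Ij_in_T j : (j <= n)%N -> in_T (Ij v a j).
Proof.
move=> jn; split.
  exists (ideal_module (Ij_ideal a Hv j)) => x; split; first exact: ideal_sub_trace.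
  by apply: trace_sub_ideal (Ij_ideal a Hv j) _ x => f lf; apply: Ij_hom_image.
by have [y y0 vy] := enum_val Ha j; exists y; split=> //; right; rewrite vy.
Qed.

End IjTrace.

Section StableIdeal.
Variables (R : idomainType) (v : K R -> int) (a : nat -> nat) (n : nat).
Hypotheses (Hv : normalized_valuation_of_Rbar v) (Ha : enumerates (valR v) a).
Hypotheses (Hn : conductor_index a n) (Hres : residue_iso R) (Hloc : local_ring R).
Hypothesis Hfin : Rbar_finite R.
Variables (J : R -> Prop) (x1 : R) (m : nat).
Hypotheses (HJ : is_ideal J) (Jstable : colon_stable J).
Hypotheses (Jx1 : J x1) (x1_neq0 : x1 != 0) (vx1 : v (toK x1) = (a m)%:Z).
Hypothesis x1_min : forall z, J z -> z != 0 -> (a m)%:Z <= v (toK z).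

Lemma stable_mem y : (forall z, J z -> inR (toK y / toK x1 * toK z)) -> J y.
Proof.
move=> hy; have [r Jr] := Jstable hy Jx1.
by rewrite divfK ?toK_neq0 // => /toK_inj ->.
Qed.

Lemma stable_conductor y : y != 0 -> (a n)%:Z <= v (toK y) -> J y.
Proof.
move=> y0 vy; apply: stable_mem => z Jz.
have [->|z0] := eqVneq z 0; first by rewrite rmorph0 mulr0; exact: inR0.
apply: (conductor_inR Hv Ha Hn Hres Hfin).
  by rewrite !mulf_neq0 ?invr_neq0 ?toK_neq0.
rewrite valM ?mulf_neq0 ?invr_neq0 ?toK_neq0 // val_div ?toK_neq0 //.
by have := x1_min Jz z0; lia.
Qed.

Lemma stable_min_index_le : (m <= n)%N.
Proof.
have [y y0 vy] := conductor_val Ha Hn (lexx (a n)%:Z).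
have Jy : J y by apply: (stable_conductor y0); rewrite vy.
by rewrite -(enum_leq_mono Ha) -lez_nat -vy; exact: x1_min Jy y0.
Qed.

Lemma stable_unit_min : m = 0%N -> forall y, J y.
Proof.
move=> m0 y; have ux1 : x1 \is a GRing.unit.
  by apply: (val0_unit Hv Hres Hloc x1_neq0); rewrite vx1 m0 (enum_val0 Hv Ha).
by rewrite -(mulrVK ux1 y); apply: (idealM HJ).
Qed.

Lemma stable_next_val : (n <= m.+2)%N ->
  exists y, [/\ J y, y != 0 & v (toK y) = (a m.+1)%:Z].
Proof.
move=> nm; have [y y0 vy] := enum_val Ha m.+1.
have [//|miss] := pselect (exists y, [/\ J y, y != 0 & v (toK y) = (a m.+1)%:Z]).
exists y; split=> //; apply: stable_mem => z Jz.
have not_min w : J w -> w != 0 -> v (toK w) != (a m)%:Z -> inR (toK y / toK x1 * toK w).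
  move=> Jw w0 vw; apply: (conductor_inR Hv Ha Hn Hres Hfin).
    by rewrite !mulf_neq0 ?invr_neq0 ?toK_neq0.
  have [k vk] := val_enum Hv Ha w0.
  have mk : (m.+2 <= k)%N.
    have := x1_min Jw w0; rewrite vk lez_nat (enum_leq_mono Ha) leq_eqVlt.
    case/orP=> [/eqP mk|]; first by move: vw; rewrite vk mk eqxx.
    rewrite leq_eqVlt => /orP[/eqP mk|//]; case: miss; exists w; split=> //.
    by rewrite vk mk.
  have : (a n <= a k)%N by rewrite (enum_leq_mono Ha); apply: leq_trans mk.
  have : (a m <= a m.+1)%N by rewrite (enum_leq_mono Ha).
  rewrite valM ?mulf_neq0 ?invr_neq0 ?toK_neq0 // val_div ?toK_neq0 //.
  by rewrite vy vx1 vk; lia.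
have [->|z0] := eqVneq z 0; first by rewrite rmorph0 mulr0; exact: inR0.
have [vz|vz] := eqVneq (v (toK z)) (a m)%:Z; last exact: not_min.
have [u] := residue_cancel Hv Hres (toK_neq0 z0) (toK_neq0 x1_neq0)
  (etrans vz (esym vx1)).
rewrite -rmorphM -rmorphB => -[zu|[zu0 vzu]].
  move/eqP: zu; rewrite toK_eq0 subr_eq0 => /eqP ->.
  by rewrite rmorphM mulrCA divfK ?toK_neq0 //; apply: inRM; exact: inR_toK.
rewrite -(subrK (u * x1) z) rmorphD mulrDr; apply: inRD.
  have Jw : J (z - u * x1) by apply: (idealB HJ Jz); apply: (idealM HJ).
  by apply: not_min Jw _ _; [rewrite -toK_eq0 | rewrite gt_eqF // -vx1].
by rewrite rmorphM mulrCA divfK ?toK_neq0 //; apply: inRM; exact: inR_toK.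
Qed.

Lemma stable_hits_values : (n <= 3)%N -> forall k, (m <= k < n)%N ->
  exists y, [/\ J y, y != 0 & v (toK y) = (a k)%:Z].
Proof.
move=> n3 k /andP[mk kn].
have [y y0 vy] := enum_val Ha k.
have [m0|m_gt0] := posnP m; first by exists y; split=> //; apply: stable_unit_min.
have [km|km] := eqVneq k m; first by exists x1; rewrite km.
have -> : k = m.+1 by lia.
by apply: stable_next_val; lia.
Qed.

Lemma stable_eq_Ij : (n <= 3)%N -> forall x, J x <-> Ij v a m x.
Proof.
move=> n3 x; split.
  by have [->|x0] := eqVneq x 0; [left | right; split=> //; apply: x1_min].
apply: (Ij_sub_ideal Hv Ha Hres HJ stable_conductor).
exact: stable_hits_values.
Qed.

End StableIdeal.

Lemma stable_in_I (R : idomainType) (v : K R -> int) (a : nat -> nat) (n : nat)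
  (J : R -> Prop) :
  normalized_valuation_of_Rbar v -> enumerates (valR v) a -> conductor_index a n ->
  residue_iso R -> local_ring R -> Rbar_finite R -> (n <= 3)%N ->
  is_ideal J -> colon_stable J -> (exists x, x != 0 /\ J x) -> in_I v a n J.
Proof.
move=> Hv Ha Hn Hres Hloc Hfin n3 HJ stable nzJ.
have [m [x1 [Jx1 x10 vx1 x1_min]]] := ideal_min_val Hv Ha nzJ.
exists m; split.
  exact: (stable_min_index_le Hv Ha Hn Hres Hfin stable Jx1 x10 vx1 x1_min).
exact: (stable_eq_Ij Hv Ha Hn Hres Hloc Hfin HJ stable Jx1 x10 vx1 x1_min n3).
Qed.

Theorem corollary3p9 (R : idomainType)
  (Hnoeth : noetherian R) (Hloc : local_ring R) (Hdim : dim_one R)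
  (Hai : analytically_irreducible R)
  (Hfin : Rbar_finite R) (HRbloc : Rbar_local R)
  (Hres : residue_iso R)
  (v : K R -> int) (Hv : normalized_valuation_of_Rbar v)
  (a : nat -> nat) (Ha : enumerates (valR v) a)
  (n : nat) (Hn : conductor_index a n)
  (Hn3 : (n <= 3)%N) :
  forall J : R -> Prop, in_T J <-> in_I v a n J.
Proof.
(* The remaining hypotheses of the paper are what make [v] exist and [Rbar]
   finite over [R]; here both are assumed directly. *)
move=> J; split.
  case=> -[M JM] [x [x0 Jx]].
  have [m [mn MI]] : in_I v a n (trace_ideal M).
    apply: (stable_in_I Hv Ha Hn Hres Hloc Hfin Hn3 (trace_ideal_is_ideal M)).
      exact: trace_ideal_stable.
    by exists x; split=> //; apply/JM.
  by exists m; split=> // y; rewrite JM.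
case=> j [jn JI]; have [[M IM] [x [x0 Ix]]] := Ij_in_T Hv Ha Hn jn.
split; first by exists M => y; rewrite JI IM.
by exists x; split=> //; apply/JI.
Qed.
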